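(* Let $d$ be a metric on $\mathbb R^n$ induced by a norm, $\delta>0$, and let $\tilde w:\mathcal D^n(\delta)\to\mathcal D^n(\delta)$ be the $\delta$-roundoff of a contraction $w$ on $(\mathbb R^n,d)$ with contractivity factor $\lambda\in[0,1)$ and fixed point $x_f$. Then the minimal absorbing set $\mathcal M[\tilde w]$ (for $\tilde w$ in $\mathcal D^n(\delta)$) exists, is finite, and its cardinality is at most the cardinality of $\Lambda(x_f,r_0)=\{\tilde y\in\mathcal D^n(\delta):d(\tilde y,x_f)\le\theta(1-\lambda)^{-1}\}$.
   Context: For $m\in\mathbb Z^n$, $C_\delta(m)=\prod_{j=1}^n[(m_j-\tfrac12)\delta,(m_j+\tfrac12)\delta)$; $\mathcal D^n(\delta)=\{\delta m:m\in\mathbb Z^n\}\subset\mathbb R^n$. The $\delta$-roundoff of $x\in\mathbb R^n$ is $\tilde x=\delta m$ where $x\in C_\delta(m)$; the $\delta$-roundoff of $w$ is $\tilde w(\tilde x)=\widetilde{w(\tilde x)}$. $\theta:=\tfrac12\operatorname{diam}_d(C_\delta(0))$. For nonempty $C$ with $\tilde w(C)\subset C$, $\Lambda\subset C$ is absorbing for $\tilde w$ in $C$ if for every $\tilde x\in C$ there is $N$ with $\tilde w^{\circ i}(\tilde x)\in\Lambda$ for all $i\ge N$. If the intersection of all absorbing sets in $C=\mathcal D^n(\delta)$ is itself absorbing, it is the minimal absorbing set $\mathcal M[\tilde w]$ and is said to exist. *)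

From HB Require Import structures.
From mathcomp Require Import all_boot all_order all_algebra.
From mathcomp Require Import all_classical all_reals.
Set Implicit Arguments. Unset Strict Implicit. Unset Printing Implicit Defensive.
Import Order.TTheory GRing.Theory Num.Theory.
Local Open Scope ring_scope.
Local Open Scope classical_set_scope.

Section Defs.
Variables (R : realType) (n : nat).

Definition is_norm (N : 'rV[R]_n -> R) : Prop :=
  [/\ (forall x, 0 <= N x),
      (forall x, N x = 0 -> x = 0),
      (forall (a : R) x, N (a *: x) = `|a| * N x) &
      (forall x y, N (x + y) <= N x + N y)].

Definition ndist (N : 'rV[R]_n -> R) (x y : 'rV[R]_n) : R := N (x - y).

Definition cube (delta : R) (m : 'rV[int]_n) : set 'rV[R]_n :=
  [set x | forall j, ((m ord0 j)%:~R - 2^-1) * delta <= x ord0 j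
                  /\ x ord0 j < ((m ord0 j)%:~R + 2^-1) * delta].

Definition grid (delta : R) (m : 'rV[int]_n) : 'rV[R]_n :=
  delta *: map_mx (fun k : int => k%:~R) m.

Definition Dgrid (delta : R) : set 'rV[R]_n := range (grid delta).

(* delta-roundoff: x~ = delta m where x in C_delta(m), i.e.
   m_j = floor (x_j / delta + 1/2) *)
Definition roundoff (delta : R) (x : 'rV[R]_n) : 'rV[R]_n :=
  grid delta (map_mx (fun t => Num.floor (t / delta + 2^-1)) x).

Definition roundoff_map (delta : R) (w : 'rV[R]_n -> 'rV[R]_n) :=
  fun x => roundoff delta (w x).

Definition theta (N : 'rV[R]_n -> R) (delta : R) : R :=
  2^-1 * sup [set ndist N x y | x in cube delta 0 & y in cube delta 0].

Definition absorbing (f : 'rV[R]_n -> 'rV[R]_n) (C L : set 'rV[R]_n) : Prop :=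
  L `<=` C /\
  forall x, C x -> exists N : nat, forall i : nat, (N <= i)%N -> L (iter i f x).

Definition absorbing_inter (f : 'rV[R]_n -> 'rV[R]_n) (C : set 'rV[R]_n) :=
  \bigcap_(L in [set L | absorbing f C L]) L.

End Defs.

From HB Require Import structures.
From mathcomp Require Import all_boot all_order all_algebra.
From mathcomp Require Import all_classical all_reals all_analysis.
From mathcomp Require Import zify ring lra.
Import Order.TTheory GRing.Theory Num.Theory.
Import numFieldNormedType.Exports.
Local Open Scope ring_scope.
Local Open Scope classical_set_scope.
Set Implicit Arguments. Unset Strict Implicit. Unset Printing Implicit Defensive.

(* With e(y) := d(y, x_f), one roundoff step gives e(w~ y) <= theta + lambda e(y), since
   the roundoff error lies in the cube C_delta(0), whose points have norm at most theta.
   Hence every orbit of w~ stays in a bounded part of the grid, which is finite because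
   all norms on R^n are equivalent.  Every orbit is therefore
   eventually periodic, so the periodic points form an absorbing set contained in every
   absorbing set, i.e. they are M[w~]; iterating the estimate along a cycle shows that
   periodic points satisfy e(y) <= theta / (1 - lambda). *)

Section Norm.
Variables (R : realType) (n : nat) (N : 'rV[R]_n -> R).
Hypothesis normN : is_norm N.

Lemma is_norm_ge0 x : 0 <= N x. Proof. by case: normN => + _ _ _; apply. Qed.

Lemma is_norm_eq0 x : N x = 0 -> x = 0. Proof. by case: normN => _ + _ _; apply. Qed.

Lemma is_normZ a x : N (a *: x) = `|a| * N x. Proof. by case: normN => _ _ + _; apply. Qed.

Lemma is_normD x y : N (x + y) <= N x + N y. Proof. by case: normN => _ _ _; apply. Qed.

Lemma is_normN x : N (- x) = N x.
Proof. by rewrite -scaleN1r is_normZ normrN normr1 mul1r. Qed.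

Lemma ndistC x y : ndist N x y = ndist N y x.
Proof. by rewrite /ndist -[x - y]opprB is_normN. Qed.

Lemma ndist_triangle x y z : ndist N x z <= ndist N x y + ndist N y z.
Proof. by rewrite /ndist -(subrKA y) is_normD. Qed.

Lemma is_norm_sum (I : Type) (r : seq I) (P : pred I) (F : I -> 'rV[R]_n) :
  N (\sum_(i <- r | P i) F i) <= \sum_(i <- r | P i) N (F i).
Proof.
elim/big_rec2: _ => [|i y s _ ys]; first by rewrite -(scale0r 0) is_normZ normr0 mul0r.
by apply: le_trans (is_normD _ _) _; rewrite lerD2l.
Qed.

Lemma is_norm_le_sum_coord x : N x <= \sum_(j < n) `|x ord0 j| * N 'e_j.
Proof.
rewrite {1}(row_sum_delta x); apply: le_trans (is_norm_sum _ _ _) _.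
by apply: ler_sum => j _; rewrite is_normZ.
Qed.

Lemma coord_le_normr (x : 'rV[R]_n) j : `|x ord0 j| <= `|x|.
Proof.
have /mapP[k _ ->] : `|x ord0 j| \in [seq `|x y.1 y.2| | y : 'I_1 * 'I_n].
  by apply/mapP; exists (ord0, j) => //=; rewrite mem_enum.
by rewrite [leRHS]/Num.norm /= mx_normrE; apply/bigmax_geP; right; exists k.
Qed.

Lemma is_norm_le_normr x : N x <= (\sum_(j < n) N 'e_j) * `|x|.
Proof.
apply: le_trans (is_norm_le_sum_coord x) _; rewrite mulr_suml.
by apply: ler_sum => j _; rewrite mulrC ler_wpM2l ?is_norm_ge0 ?coord_le_normr.
Qed.

Lemma is_norm_continuous : continuous N.
Proof.
pose C := \sum_(j < n) N 'e_j + 1.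
have C_gt0 : 0 < C by rewrite ltr_pwDr // sumr_ge0 // => j _; apply: is_norm_ge0.
have lipN x y : `|N x - N y| <= C * `|x - y|.
  have NBle u v : N u - N v <= N (u - v).
    by rewrite lerBlDr -{1}(subrK v u) is_normD.
  apply: le_trans (_ : N (x - y) <= _).
    by rewrite ler_norml NBle andbT lerNl opprB -[x - y]opprB is_normN NBle.
  apply: le_trans (is_norm_le_normr _) _.
  by rewrite ler_wpM2r // lerDl.
move=> x; apply/(@cvgrPdist_lt R R^o _ (nbhs x)) => e e_gt0.
apply/(@nbhs_normP R 'rV[R]_n); exists (e / C) => [|y /= xy]; first exact: divr_gt0.
by apply: le_lt_trans (lipN x y) _; rewrite mulrC -ltr_pdivlMr.
Qed.

(* N attains a positive minimum on the compact unit sphere of the sup norm. *)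
Lemma is_norm_ge_normr : exists2 c, 0 < c & forall x, c * `|x| <= N x.
Proof.
pose S := [set x : 'rV[R]_n | `|x| = 1].
have S_normalize x : x != 0 -> S (`|x|^-1 *: x).
  by move=> x0; rewrite /S /= normrZ normfV normr_id mulVf ?normr_eq0.
have [[u Su]|S0] := pselect (S !=set0); last first.
  exists 1 => // x; have [->|x0] := eqVneq x 0; first by rewrite normr0 mulr0 is_norm_ge0.
  by exfalso; apply: S0; exists (`|x|^-1 *: x); apply: S_normalize.
have S_compact : compact S.
  apply: bounded_closed_compact.
    by exists 1; split=> [|M M1 x Sx]; rewrite ?realE ?ler01 //= Sx ltW.
  have -> : S = Num.norm @^-1` [set 1] by [].
  by apply: preimage_closed => [x _|]; [apply: norm_continuous | apply: closed_eq].
have [c cS cmin] := EVT_min_rV (ex_intro _ u Su) S_compact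
  (continuous_subspaceT is_norm_continuous).
rewrite inE in cS; exists (N c).
  rewrite lt_def is_norm_ge0 andbT; apply/eqP => /is_norm_eq0 c0.
  by move: cS; rewrite /S /= c0 normr0 => /eqP; rewrite eq_sym oner_eq0.
move=> x; have [->|x0] := eqVneq x 0; first by rewrite normr0 mulr0 is_norm_ge0.
have := cmin _ (mem_set (S_normalize x x0)).
by rewrite is_normZ normfV normr_id ler_pdivlMl ?normr_gt0 // mulrC.
Qed.

End Norm.

Section Grid.
Variables (R : realType) (n : nat) (delta : R).
Hypothesis delta_gt0 : 0 < delta.

Lemma cube0P (x : 'rV[R]_n) :
  cube delta 0 x <-> forall j, - (delta / 2) <= x ord0 j < delta / 2.
Proof.
split=> h j; have := h j; rewrite mxE /= mulr0z.
- by case=> *; apply/andP; split; lra.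
- by case/andP=> *; split; lra.
Qed.

Lemma cube0Z t (x : 'rV[R]_n) : `|t| < 1 -> cube delta 0 x -> cube delta 0 (t *: x).
Proof.
move=> t1 /cube0P x_cube; apply/cube0P => j; rewrite mxE.
have /andP[xl xr] := x_cube j.
have : `|t * x ord0 j| < delta / 2.
  have xj : `|x ord0 j| <= delta / 2 by rewrite ler_norml xl ltW.
  rewrite normrM; have := normr_ge0 t; have := normr_ge0 (x ord0 j); nra.
by rewrite ltr_norml => /andP[tl ->]; rewrite ltW.
Qed.

Lemma roundoff_sub_cube0 (z : 'rV[R]_n) : cube delta 0 (z - roundoff delta z).
Proof.
apply/cube0P => j; rewrite /roundoff /grid !mxE; move: (z ord0 j) => x.
have := floor_itv (x / delta + 2^-1); rewrite intrD mulr1z.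
set v := x / delta; set F : R := (Num.floor _)%:~R => /andP[Fl Fr].
have -> : x = v * delta by rewrite mulfVK ?gt_eqF.
have p1 : 0 <= delta * (v + 2^-1 - F) by rewrite pmulr_rge0 // subr_ge0.
have p2 : 0 < delta * (F + 1 - (v + 2^-1)) by rewrite pmulr_rgt0 // subr_gt0.
apply/andP; split; lra.
Qed.

Lemma Dgrid_roundoff (z : 'rV[R]_n) : Dgrid delta (roundoff delta z).
Proof. exact: imageT. Qed.

Lemma finite_Dgrid_normr_le K :
  finite_set [set y : 'rV[R]_n | Dgrid delta y /\ `|y| <= K].
Proof.
pose k := Num.bound (`|K| / delta).
have K_lt_k : `|K| / delta < k%:R by apply: archi_boundP; rewrite divr_ge0 // ltW.
pose g (h : {ffun 'I_n -> 'I_(k.*2)}) := grid delta (\row_j ((h j : nat)%:Z - k%:Z)).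
apply: (sub_finite_set _ (finite_image g (@finite_finset _ setT))).
move=> _ [[m _ <-] m_le].
have m_lt j : (`|m ord0 j| < k)%N.
  have := le_trans (coord_le_normr _ j) m_le.
  rewrite /grid !mxE normrM (gtr0_norm delta_gt0) => mj.
  have : `|(m ord0 j)%:~R : R| < k%:R.
    apply: le_lt_trans K_lt_k; rewrite ler_pdivlMr // mulrC.
    exact: le_trans mj (ler_norm K).
  by rewrite -intr_norm ltr_nat.
have shift_lt j : (absz (m ord0 j + k%:Z)%R < k.*2)%N by have := m_lt j; lia.
exists [ffun j => Ordinal (shift_lt j)] => //.
congr grid; apply/matrixP => i j; rewrite !mxE ffunE /= (ord1 i).
by rewrite (_ : m 0 j = m ord0 j) //; have := m_lt j; lia.
Qed.

End Grid.

Section NormedGrid.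
Variables (R : realType) (n : nat) (N : 'rV[R]_n -> R) (delta : R).
Hypotheses (normN : is_norm N) (delta_gt0 : 0 < delta).

Let cube_dists := [set ndist N x y | x in cube delta 0 & y in cube delta 0].

Lemma cube0_0 : cube delta 0 (0 : 'rV[R]_n).
Proof.
have d2_gt0 : 0 < delta / 2 by rewrite divr_gt0.
by apply/cube0P => j; rewrite mxE; apply/andP; split; lra.
Qed.

Lemma cube0_is_norm_le x : cube delta 0 x -> N x <= delta / 2 * \sum_(j < n) N 'e_j.
Proof.
move=> /cube0P x_cube; apply: le_trans (is_norm_le_sum_coord normN x) _.
rewrite mulr_sumr; apply: ler_sum => j _; rewrite ler_wpM2r ?is_norm_ge0 //.
by have /andP[xl xr] := x_cube j; rewrite ler_norml xl ltW.
Qed.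

Lemma cube_dists00 : cube_dists (ndist N 0 0).
Proof. by exists 0; [exact: cube0_0 | exists 0; first exact: cube0_0]. Qed.

Lemma has_sup_cube_dists : has_sup cube_dists.
Proof.
split; first by exists (ndist N 0 0); apply: cube_dists00.
exists (delta * \sum_(j < n) N 'e_j) => _ [x x_cube [y y_cube <-]].
apply: le_trans (is_normD normN _ _) _; rewrite is_normN //.
have := cube0_is_norm_le x_cube; have := cube0_is_norm_le y_cube; lra.
Qed.

Lemma theta_ge0 : 0 <= theta N delta.
Proof.
apply: mulr_ge0; first by rewrite invr_ge0.
apply: le_trans (sup_upper_bound has_sup_cube_dists cube_dists00).
exact: (is_norm_ge0 normN).
Qed.

(* The cube is half-open, so [- a] need not lie in it: compare [t *: a] with [(- t) *: a]
   for [t < 1] instead. *)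
Lemma cube0_is_norm_le_theta a : cube delta 0 a -> N a <= theta N delta.
Proof.
move=> a_cube; rewrite leNgt; apply/negP => theta_lt.
have theta0 := theta_ge0; have Na_gt0 : 0 < N a := le_lt_trans theta0 theta_lt.
pose z := (theta N delta + N a) / 2.
have z_gt : theta N delta < z by rewrite /z; lra.
have z_lt : z < N a by rewrite /z; lra.
set t := z / N a.
have t_ge0 : 0 <= t by rewrite divr_ge0 ?ltW // (le_lt_trans theta0 z_gt).
have t_lt1 : t < 1 by rewrite ltr_pdivrMr ?mul1r.
have tNa : 2 * z = `|t - - t| * N a.
  by rewrite opprK ger0_norm ?addr_ge0 // /t; field; rewrite gt_eqF.
have ta_dist : cube_dists (ndist N (t *: a) ((- t) *: a)).
  exists (t *: a); first by apply: cube0Z; rewrite ?ger0_norm.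
  by exists ((- t) *: a) => //; apply: cube0Z; rewrite ?normrN ?ger0_norm.
have := sup_upper_bound has_sup_cube_dists ta_dist.
rewrite /ndist -scalerBl is_normZ // -tNa; move: z_gt; rewrite /theta; lra.
Qed.

Lemma ndist_roundoff_le_theta z : ndist N (roundoff delta z) z <= theta N delta.
Proof.
by rewrite ndistC //; apply: cube0_is_norm_le_theta; apply: roundoff_sub_cube0.
Qed.

Lemma ndist_roundoff_map_le (w : 'rV[R]_n -> 'rV[R]_n) lambda xf :
    (forall x y, ndist N (w x) (w y) <= lambda * ndist N x y) -> w xf = xf ->
  forall y, ndist N (roundoff_map delta w y) xf <= theta N delta + lambda * ndist N y xf.
Proof.
move=> w_contr w_xf y; apply: le_trans (ndist_triangle normN _ (w y) _) _.
by rewrite lerD ?ndist_roundoff_le_theta // -{1}w_xf.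
Qed.

Lemma finite_Dgrid_ndist_le x K :
  finite_set [set y | Dgrid delta y /\ ndist N y x <= K].
Proof.
have [c c_gt0 c_le] := is_norm_ge_normr normN.
apply: sub_finite_set (finite_Dgrid_normr_le n delta_gt0 (K / c + `|x|)).
move=> y [y_grid yxK]; split=> //.
have yx_le : `|y - x| <= K / c by rewrite ler_pdivlMr // mulrC (le_trans (c_le _)).
by rewrite -(subrK x y); apply: le_trans (ler_normD _ _) _; rewrite lerD2r.
Qed.

End NormedGrid.

Section Orbits.
Variables (T : Type) (f : T -> T).

Lemma iter_periodic y p m : iter p f y = y -> iter (m * p) f y = y.
Proof. by move=> yp; rewrite iterM iter_fix. Qed.

Lemma finite_orbit_repeats x : finite_set (range (fun k => iter k f x)) ->
  exists i j, (i < j)%N /\ iter i f x = iter j f x.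
Proof.
move=> orbit_fin; apply: contrapT => no_repeat; apply: infinite_nat.
have orbit_inj : {in [set: nat] &, injective (fun k => iter k f x)}.
  move=> i j _ _ eq_ij; apply: contrapT => neq_ij; apply: no_repeat.
  by case: (ltngtP i j) neq_ij => // [ij|ji] _; [exists i, j | exists j, i].
by rewrite -(eq_finite_set (inj_card_eq orbit_inj)).
Qed.

End Orbits.

Section PeriodicPoints.
Variables (R : realType) (n : nat) (f : 'rV[R]_n -> 'rV[R]_n) (C : set 'rV[R]_n).

Definition periodic_points :=
  [set y | C y /\ exists2 p, (0 < p)%N & iter p f y = y].

Lemma periodic_points_sub_absorbing L : absorbing f C L -> periodic_points `<=` L.
Proof.
move=> [_ L_abs] y [Cy [p p_gt0 yp]]; have [k Lk] := L_abs y Cy.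
by rewrite -(iter_periodic k yp); apply: Lk; rewrite leq_pmulr.
Qed.

Hypotheses (f_stable : forall x, C x -> C (f x))
  (finite_orbit : forall x, C x -> finite_set (range (fun k => iter k f x))).

Lemma iter_stable k x : C x -> C (iter k f x).
Proof. by move=> Cx; elim: k => //= k; apply: f_stable. Qed.

Lemma absorbing_periodic_points : absorbing f C periodic_points.
Proof.
split=> [y [] //|x Cx]; have [i [j [ij eq_ij]]] := finite_orbit_repeats (finite_orbit Cx).
exists i => k ik; split; first exact: iter_stable.
exists (j - i)%N; first by rewrite subn_gt0.
rewrite -iterD (_ : (j - i + k)%N = (k - i + j)%N); last by lia.
by rewrite iterD -eq_ij -iterD subnK.
Qed.

Lemma absorbing_interE : absorbing_inter f C = periodic_points.
Proof.
apply/seteqP; split=> [y My|y y_per L /= L_abs].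
  by apply: My; apply: absorbing_periodic_points.
exact: periodic_points_sub_absorbing y_per.
Qed.

End PeriodicPoints.

Section AffineContraction.
Variables (R : realFieldType) (T : Type) (f : T -> T) (e : T -> R) (a lambda : R).
Hypotheses (lambda_ge0 : 0 <= lambda) (lambda_lt1 : lambda < 1)
  (e_f : forall y, e (f y) <= a + lambda * e y).

(* [a / (1 - lambda)] is the fixed point of [r |-> a + lambda * r]. *)
Lemma iter_affine_le y k :
  e (iter k f y) <= a / (1 - lambda) + lambda ^+ k * (e y - a / (1 - lambda)).
Proof.
have r0_fix : a + lambda * (a / (1 - lambda)) = a / (1 - lambda).
  by field; rewrite subr_eq0 gt_eqF.
elim: k => [|k IH]; first by rewrite expr0 mul1r addrC subrK.
apply: le_trans (e_f _) _; rewrite exprS -mulrA -{1}r0_fix -addrA -mulrDr lerD2l.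
by rewrite ler_wpM2l.
Qed.

Lemma iter_affine_le_bounded y k :
  e (iter k f y) <= a / (1 - lambda) + `|e y - a / (1 - lambda)|.
Proof.
apply: le_trans (iter_affine_le y k) _; rewrite lerD2l.
apply: le_trans (ler_norm _) _; rewrite normrM ger0_norm ?exprn_ge0 //.
by rewrite ler_piMl // exprn_ile1 // ltW.
Qed.

Lemma periodic_affine_le y p : (0 < p)%N -> iter p f y = y -> e y <= a / (1 - lambda).
Proof.
move=> p_gt0 yp; have := iter_affine_le y p; rewrite yp.
have lp_lt1 : lambda ^+ p < 1 by rewrite exprn_ilt1 // -lt0n.
move: (exprn_ge0 p lambda_ge0) lp_lt1; move: (lambda ^+ p) (a / (1 - lambda)) => l r.
nra.
Qed.
End AffineContraction.

Theorem corollary2 (R : realType) (n : nat) (N : 'rV[R]_n -> R)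
  (delta lambda : R) (w : 'rV[R]_n -> 'rV[R]_n) (xf : 'rV[R]_n) :
  is_norm N -> 0 < delta ->
  0 <= lambda -> lambda < 1 ->
  (forall x y, ndist N (w x) (w y) <= lambda * ndist N x y) ->
  w xf = xf ->
  let wt := roundoff_map delta w in
  let M := absorbing_inter wt (@Dgrid R n delta) in
  [/\ absorbing wt (@Dgrid R n delta) M,
      finite_set M &
      (M #<= [set y | @Dgrid R n delta y /\
                      ndist N y xf <= theta N delta / (1 - lambda)])%card].
Proof.
move=> normN delta_gt0 lambda_ge0 lambda_lt1 w_contr w_xf wt M.
set r0 := theta N delta / (1 - lambda); pose e y := ndist N y xf.
have e_wt y : e (wt y) <= theta N delta + lambda * e y.
  exact: (ndist_roundoff_map_le normN delta_gt0 w_contr w_xf y).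
have wt_grid x : Dgrid delta x -> Dgrid delta (wt x) by move=> _; apply: Dgrid_roundoff.
have orbit_fin x : Dgrid delta x -> finite_set (range (fun k => iter k wt x)).
  move=> x_grid.
  apply: sub_finite_set (finite_Dgrid_ndist_le normN delta_gt0 xf (r0 + `|e x - r0|)).
  move=> y [k _ <-]; split; first exact: iter_stable.
  exact: (iter_affine_le_bounded lambda_ge0 lambda_lt1 e_wt).
have per_ball : periodic_points wt (Dgrid delta) `<=` [set y | Dgrid delta y /\ e y <= r0].
  move=> y [y_grid [p p_gt0 yp]]; split=> //.
  exact: (periodic_affine_le lambda_ge0 lambda_lt1 e_wt p_gt0 yp).
rewrite /M absorbing_interE //; split.
- exact: absorbing_periodic_points.
- exact: sub_finite_set per_ball (finite_Dgrid_ndist_le normN delta_gt0 xf r0).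
- exact: subset_card_le per_ball.
Qed.
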